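(* Let $H\geq 2$ be an integer and $C>0$ a real number, let $A=\{\frac{b}{a}: a,b\in\mathbb{Z},\ 0<a\le H,\ |\frac ba|\le C\}$, and set $\varepsilon:=\frac{1}{H(H-1)}$. Let $f(x)=c_1x^{d_1}+\cdots+c_tx^{d_t}$ with $t\ge1$, integers $0\le d_1<\cdots<d_t$, and $c_1,\dots,c_t\in A\setminus\{0\}$, and let $\beta$ be a real number with $\beta\ge\frac{2C}{\varepsilon}+1$. Write $c_t=\frac{b}{a}$ with $a,b\in\mathbb{Z}$, $a>0$, $\gcd(a,b)=1$. For $i=1,2,\dots,H$ let $$I_i:=\left(\frac{f(\beta)}{\beta^{d_t}}\,i-\frac{\varepsilon}{2}\,i,\ \frac{f(\beta)}{\beta^{d_t}}\,i+\frac{\varepsilon}{2}\,i\right).$$ Then $I_a\cap\mathbb{Z}=\{b\}$, and whenever $a_0\in\{1,\dots,H\}$ and $b_0\in\mathbb{Z}$ satisfy $b_0\in I_{a_0}$, we have $\frac{b_0}{a_0}=\frac{b}{a}$.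
   Context: Here $f(\beta)$ is real since all coefficients are rational and $\beta$ is real. *)

From Stdlib Require Import Reals Lra Lia ZArith.
Open Scope R_scope.

Definition inA (H : Z) (C : R) (x : R) : Prop :=
  exists a b : Z, (0 < a <= H)%Z /\ x = IZR b / IZR a /\ Rabs x <= C.

(* f(x) = c_1 x^{d_1} + ... + c_t x^{d_t}  (indices 1..t, t >= 1). *)
Definition fpoly (t : nat) (c : nat -> R) (d : nat -> nat) (x : R) : R :=
  sum_f_R0 (fun i => c (S i) * x ^ (d (S i))) (t - 1).

Definition inI (r eps : R) (i : R) (x : R) : Prop :=
  r * i - eps / 2 * i < x < r * i + eps / 2 * i.

(** Dividing [f(beta)] by [beta^(d_t)] leaves [c_t] plus lower terms, which a
    geometric-series bound makes smaller than [C / (beta - 1) <= eps / 2]; so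
    [r := f(beta) / beta^(d_t)] is within [eps / 2] of [b/a], while [b0] lies in
    [I_(a0)] exactly when [b0/a0] is within [eps / 2] of [r].  Two distinct
    fractions with denominators at most [H] are at distance at least
    [1 / (H (H - 1)) = eps], hence [b0/a0 = b/a].  For [a0 = a] this needs
    [a <= H], which holds because [c_t] lies in [A] and [b/a] is reduced. *)

From Stdlib Require Import Reals Lra Lia ZArith.
Open Scope R_scope.

Lemma Rabs_sparse_sum_le (u : nat -> R) (e : nat -> nat) (C beta : R) (n : nat) :
  1 <= beta ->
  (forall i : nat, (i < n)%nat -> (e i < e (S i))%nat) ->
  (forall i : nat, (i <= n)%nat -> Rabs (u i) <= C) ->
  Rabs (sum_f_R0 (fun i => u i * beta ^ e i) n) * (beta - 1)
    <= C * (beta ^ S (e n) - 1).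
Proof.
  intros hbeta he hu.
  induction n as [|n IH]; simpl sum_f_R0; simpl pow.
  - rewrite Rabs_mult, (Rabs_pos_eq (beta ^ _)) by (apply pow_le; lra).
    assert (hP : 1 <= beta ^ e 0%nat) by (apply pow_R1_Rle; lra).
    assert (hu0 : Rabs (u 0%nat) <= C) by (apply hu; lia).
    assert (0 <= Rabs (u 0%nat)) by apply Rabs_pos.
    set (P := beta ^ e 0%nat) in *.
    assert (0 <= (C - Rabs (u 0%nat)) * (P * (beta - 1))) by (apply Rmult_le_pos; nra).
    assert (0 <= C * (P - 1)) by (apply Rmult_le_pos; lra).
    nra.
  - set (s := sum_f_R0 _ n).
    set (Q := beta ^ e (S n)).
    assert (hs : Rabs s * (beta - 1) <= C * (beta * beta ^ e n - 1))
      by (apply IH; intros; [apply he | apply hu]; lia).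
    assert (hmono : beta * beta ^ e n <= Q)
      by (apply (Rle_pow beta (S (e n))); [lra | apply he; lia]).
    assert (hun : Rabs (u (S n)) <= C) by (apply hu; lia).
    assert (htri : Rabs (s + u (S n) * Q) <= Rabs s + Rabs (u (S n)) * Q).
    { rewrite <- (Rabs_pos_eq Q) at 2 by (apply pow_le; lra).
      rewrite <- Rabs_mult. apply Rabs_triang. }
    assert (1 <= Q) by (apply pow_R1_Rle; lra).
    assert (Rabs (s + u (S n) * Q) * (beta - 1) <= (Rabs s + Rabs (u (S n)) * Q) * (beta - 1))
      by (apply Rmult_le_compat_r; lra).
    assert (0 <= (C - Rabs (u (S n))) * (Q * (beta - 1))) by (apply Rmult_le_pos; nra).
    assert (C * (beta * beta ^ e n) <= C * Q)
      by (apply Rmult_le_compat_l; [pose proof (Rabs_pos (u (S n))) |]; lra).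
    nra.
Qed.

Lemma Rabs_sparse_sum_div_lead_lt (u : nat -> R) (e : nat -> nat) (C beta : R) (n : nat) :
  0 < C -> 1 < beta ->
  (forall i : nat, (i < n)%nat -> (e i < e (S i))%nat) ->
  (forall i : nat, (i <= n)%nat -> Rabs (u i) <= C) ->
  Rabs (sum_f_R0 (fun i => u i * beta ^ e i) n / beta ^ e n - u n) * (beta - 1) < C.
Proof.
  intros hC hbeta he hu.
  destruct n as [|n]; simpl sum_f_R0.
  - replace (u 0%nat * beta ^ e 0%nat / beta ^ e 0%nat - u 0%nat) with 0
      by (field; apply pow_nonzero; lra).
    rewrite Rabs_R0. lra.
  - set (s := sum_f_R0 _ n).
    set (Q := beta ^ e (S n)).
    assert (hQ : 0 < Q) by (apply pow_lt; lra).
    replace ((s + u (S n) * Q) / Q - u (S n)) with (s / Q) by (field; lra).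
    assert (hs : Rabs s * (beta - 1) <= C * (beta ^ S (e n) - 1))
      by (apply Rabs_sparse_sum_le; intros; [lra | apply he | apply hu]; lia).
    assert (hmono : beta ^ S (e n) <= Q) by (apply Rle_pow; [lra | apply he; lia]).
    unfold Rdiv. rewrite Rabs_mult, Rabs_inv, (Rabs_pos_eq Q) by lra.
    apply (Rmult_lt_reg_r Q); [exact hQ|].
    replace (Rabs s * / Q * (beta - 1) * Q) with (Rabs s * (beta - 1)) by (field; lra).
    nra.
Qed.

Lemma Rabs_fpoly_div_lead_sub_lt (t : nat) (c : nat -> R) (d : nat -> nat) (C beta : R) :
  (1 <= t)%nat -> 0 < C -> 1 < beta ->
  (forall i : nat, (1 <= i)%nat -> (i < t)%nat -> (d i < d (S i))%nat) ->
  (forall i : nat, (1 <= i)%nat -> (i <= t)%nat -> Rabs (c i) <= C) ->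
  Rabs (fpoly t c d beta / beta ^ d t - c t) * (beta - 1) < C.
Proof.
  intros ht hC hbeta hd hc.
  destruct t as [|m]; [lia|].
  unfold fpoly. replace (S m - 1)%nat with m by lia.
  apply (Rabs_sparse_sum_div_lead_lt (fun i => c (S i)) (fun i => d (S i)));
    [exact hC | exact hbeta | intros i hi; apply hd | intros i hi; apply hc]; lia.
Qed.

Lemma reduced_denominator_le (a b a' b' : Z) :
  (0 < a)%Z -> (0 < a')%Z -> Z.gcd a b = 1%Z ->
  IZR b / IZR a = IZR b' / IZR a' -> (a <= a')%Z.
Proof.
  intros ha ha' hab he.
  assert (hcross : (b * a' = a * b')%Z).
  { apply eq_IZR. rewrite !mult_IZR.
    assert (IZR a <> 0) by (apply not_0_IZR; lia).
    assert (IZR a' <> 0) by (apply not_0_IZR; lia).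
    field_simplify_eq in he; auto. }
  assert (hdiv : (a | a')%Z) by (apply (Z.gauss a b a'); [exists b'; lia | exact hab]).
  apply Z.divide_pos_le; assumption.
Qed.

Lemma eq_IZR_of_Rabs_sub_lt_1 (x y : Z) : Rabs (IZR x - IZR y) < 1 -> x = y.
Proof.
  rewrite <- minus_IZR. intros [hhi hlo]%Rabs_def2.
  assert (hlo' : IZR (-1) < IZR (x - y)) by (simpl; lra).
  apply lt_IZR in hhi, hlo'. lia.
Qed.

Lemma fractions_eq_of_Rabs_sub_lt (H a b a0 b0 : Z) :
  (2 <= H)%Z -> (1 <= a <= H)%Z -> (1 <= a0 <= H)%Z ->
  Rabs (IZR b / IZR a - IZR b0 / IZR a0) < 1 / (IZR H * (IZR H - 1)) ->
  IZR b / IZR a = IZR b0 / IZR a0.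
Proof.
  intros hH ha ha0 hdist.
  assert (hHr : 2 <= IZR H) by (apply IZR_le; lia).
  assert (hA : 0 < IZR a) by (apply IZR_lt; lia).
  assert (hA0 : 0 < IZR a0) by (apply IZR_lt; lia).
  assert (hcross : Rabs (IZR (b * a0) - IZR (b0 * a))
                   = Rabs (IZR b / IZR a - IZR b0 / IZR a0) * (IZR a * IZR a0)).
  { rewrite <- (Rabs_pos_eq (IZR a * IZR a0)) by nra. rewrite <- Rabs_mult.
    f_equal. rewrite !mult_IZR. field. lra. }
  (* Distinct denominators give [a a0 <= H (H - 1)]; equal ones only cost a factor [a <= H]. *)
  assert (hprod : IZR a * IZR a0 <= IZR H * (IZR H - 1) \/ a = a0).
  { destruct (Z.eq_dec a a0) as [| hne]; [right; assumption | left].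
    assert (hZ : (a * a0 <= H * (H - 1))%Z) by (destruct (Z_lt_le_dec a a0); nia).
    apply IZR_le in hZ. rewrite !mult_IZR, minus_IZR in hZ. exact hZ. }
  destruct hprod as [hprod | <-].
  - assert (hk : (b * a0 = b0 * a)%Z).
    { apply eq_IZR_of_Rabs_sub_lt_1. rewrite hcross.
      apply (Rlt_le_trans _ (1 / (IZR H * (IZR H - 1)) * (IZR H * (IZR H - 1)))).
      + apply (Rle_lt_trans _ (Rabs (IZR b / IZR a - IZR b0 / IZR a0) * (IZR H * (IZR H - 1)))).
        * apply Rmult_le_compat_l; [apply Rabs_pos | exact hprod].
        * apply Rmult_lt_compat_r; [nra | exact hdist].
      + right. field. nra. }
    apply (f_equal IZR) in hk. rewrite !mult_IZR in hk.
    field_simplify_eq; lra.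
  - assert (hk : b = b0).
    { apply eq_IZR_of_Rabs_sub_lt_1.
      replace (IZR b - IZR b0) with ((IZR b / IZR a - IZR b0 / IZR a) * IZR a) by (field; lra).
      rewrite Rabs_mult, (Rabs_pos_eq (IZR a)) by lra.
      assert (hAH : IZR a <= IZR H) by (apply IZR_le; lia).
      assert (heps : 1 / (IZR H * (IZR H - 1)) * IZR H <= 1)
        by (apply (Rmult_le_reg_r (IZR H - 1)); [lra|]; field_simplify; nra).
      assert (0 <= Rabs (IZR b / IZR a - IZR b0 / IZR a)) by apply Rabs_pos.
      nra. }
    now subst.
Qed.

Lemma inI_iff_Rabs_sub_lt (r eps i x : R) :
  0 < i -> inI r eps i x <-> Rabs (x / i - r) < eps / 2.
Proof.
  intros hi. unfold inI.
  replace (x / i - r) with ((x - r * i) / i) by (field; lra).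
  unfold Rdiv. rewrite Rabs_mult, Rabs_inv, (Rabs_pos_eq i) by lra.
  split.
  - intros [hlo hhi]. apply (Rmult_lt_reg_r i); [exact hi|].
    rewrite Rmult_assoc, Rinv_l, Rmult_1_r by lra. apply Rabs_def1; lra.
  - intros h. apply (Rmult_lt_compat_r i) in h; [|exact hi].
    rewrite Rmult_assoc, Rinv_l, Rmult_1_r in h by lra.
    apply Rabs_def2 in h. lra.
Qed.

Theorem lemma2p7 (H : Z) (C : R) (t : nat) (c : nat -> R) (d : nat -> nat)
    (beta : R) (a b : Z)
    (hH : (2 <= H)%Z) (hC : 0 < C) (ht : (1 <= t)%nat)
    (hd : forall i : nat, (1 <= i)%nat -> (i < t)%nat -> (d i < d (S i))%nat)
    (hc : forall i : nat, (1 <= i)%nat -> (i <= t)%nat -> inA H C (c i) /\ c i <> 0)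
    (hbeta : beta >= 2 * C / (1 / (IZR H * (IZR H - 1))) + 1)
    (ha : (0 < a)%Z) (hab : Z.gcd a b = 1%Z) (hct : c t = IZR b / IZR a) :
  let eps := 1 / (IZR H * (IZR H - 1)) in
  let r := fpoly t c d beta / beta ^ (d t) in
  (forall z : Z, inI r eps (IZR a) (IZR z) <-> z = b) /\
  (forall a0 b0 : Z, (1 <= a0 <= H)%Z -> inI r eps (IZR a0) (IZR b0) ->
     IZR b0 / IZR a0 = IZR b / IZR a).
Proof.
  intros eps r.
  assert (haH : (a <= H)%Z).
  { destruct (hc t ht (le_n t)) as [[a' [b' [ha' [he _]]]] _].
    rewrite hct in he. pose proof (reduced_denominator_le a b a' b' ha ltac:(lia) hab he).
    lia. }
  assert (hHr : 2 <= IZR H) by (apply IZR_le; lia).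
  assert (hHH : 0 < IZR H * (IZR H - 1)) by nra.
  replace (2 * C / (1 / (IZR H * (IZR H - 1)))) with (2 * C * (IZR H * (IZR H - 1)))
    in hbeta by (field; lra).
  assert (hbeta1 : 1 < beta) by (pose proof (Rmult_lt_0_compat _ _ hC hHH); lra).
  assert (hCeps : 2 * C <= eps * (beta - 1)).
  { unfold eps. apply (Rmult_le_reg_r (IZR H * (IZR H - 1))); [exact hHH|].
    field_simplify; lra. }
  assert (hclose : Rabs (IZR b / IZR a - r) < eps / 2).
  { rewrite <- hct, Rabs_minus_sym.
    apply (Rmult_lt_reg_r (beta - 1)); [lra|].
    apply (Rlt_le_trans _ C); [|lra].
    apply Rabs_fpoly_div_lead_sub_lt; [exact ht | exact hC | exact hbeta1 | exact hd |].
    intros i hi1 hit. destruct (hc i hi1 hit) as [[? [? [_ [_ hCi]]]] _]. exact hCi. }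
  assert (hsep : forall a0 b0 : Z, (1 <= a0 <= H)%Z -> inI r eps (IZR a0) (IZR b0) ->
                   IZR b0 / IZR a0 = IZR b / IZR a).
  { intros a0 b0 ha0 hin%inI_iff_Rabs_sub_lt; [|apply IZR_lt; lia].
    apply (fractions_eq_of_Rabs_sub_lt H); [lia | lia | lia |].
    replace (IZR b0 / IZR a0 - IZR b / IZR a) with ((IZR b0 / IZR a0 - r) + (r - IZR b / IZR a))
      by ring.
    eapply Rle_lt_trans; [apply Rabs_triang|].
    rewrite Rabs_minus_sym in hclose. fold eps. lra. }
  split; [|exact hsep].
  intros z; split.
  - intros hz. apply hsep in hz; [|lia].
    apply eq_IZR, (Rmult_eq_reg_r (/ IZR a)); [exact hz|].
    apply Rinv_neq_0_compat, not_0_IZR; lia.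
  - intros ->. apply inI_iff_Rabs_sub_lt; [apply IZR_lt; lia | exact hclose].
Qed.
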